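(* For any integers $n,m\geq 1$, the order of $1+q^m$ in $(q;q)_n=\prod_{i=1}^n(1-q^i)$ is $\lfloor n/2m\rfloor$; that is, $(1+q^m)^{\lfloor n/2m\rfloor}$ divides $(q;q)_n$ and $(1+q^m)^{\lfloor n/2m\rfloor+1}$ does not divide $(q;q)_n$. *)

From mathcomp Require Import all_boot all_algebra.
Set Implicit Arguments. Unset Strict Implicit. Unset Printing Implicit Defensive.
Import GRing.Theory.
Local Open Scope ring_scope.

Definition qpoch (n : nat) : {poly int} := \prod_(1 <= i < n.+1) (1 - 'X^i).

Definition zdivides (p f : {poly int}) : Prop := exists r : {poly int}, f = p * r.

From mathcomp Require Import all_boot all_algebra all_field.
Import GRing.Theory Num.Theory.

Set Implicit Arguments.
Unset Strict Implicit.
Unset Printing Implicit Defensive.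

Local Open Scope ring_scope.

(* Evaluate at a primitive (2m)-th root of unity z, where 1 + q^m vanishes.
   The factor 1 - q^i vanishes at z exactly when 2m | i, and then
   1 - q^(2mk) = (1 + q^m) (1 - q^m) (1 + q^(2m) + ... + q^(2m(k-1))) with a
   cofactor taking the value 2k != 0 at z.  Hence (q;q)_n = (1 + q^m)^(n/2m) s
   with s(z) != 0, and one more factor 1 + q^m would force s(z) = 0. *)

Lemma sub1X2n_factor (R : comPzRingType) (x : R) (k : nat) :
  1 - x ^+ (2 * k) = (1 + x) * ((1 - x) * \sum_(j < k) x ^+ (2 * j)).
Proof.
under eq_bigr do rewrite exprM.
rewrite exprM mulrA [(1 + x) * _]mulrC -subr_sqr expr1n -[LHS]opprB subrX1.
by rewrite -mulNr opprB.
Qed.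

Section EvalAtPrimitiveRoot.

Variables (F : numDomainType) (m : nat) (z : F).
Hypotheses (m_gt0 : (0 < m)%N) (z_prim : (2 * m)%N.-primitive_root z).

Definition evz : {rmorphism {poly int} -> F} := horner_eval z \o map_poly intr.

Lemma evzX : evz 'X = z.
Proof. by rewrite /= map_polyX horner_evalE hornerX. Qed.

Lemma prim_expr_half : z ^+ m = -1.
Proof.
have zm_sqr : (z ^+ m) ^+ 2 = 1 by rewrite -exprM mulnC prim_expr_order.
have zm_neq1 : z ^+ m != 1.
  by rewrite -(prim_order_dvd z_prim) gtnNdvd // ltn_Pmull.
by move/eqP: zm_sqr; rewrite sqrf_eq1 (negPf zm_neq1) => /eqP.
Qed.

Lemma evz_1DXm : evz (1 + 'X^m) = 0.
Proof. by rewrite rmorphD rmorph1 rmorphXn evzX prim_expr_half subrr. Qed.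

Lemma evz_1BXn_eq0 (i : nat) : (evz (1 - 'X^i) == 0) = (2 * m %| i)%N.
Proof.
by rewrite rmorphB rmorph1 rmorphXn evzX subr_eq0 eq_sym (prim_order_dvd z_prim).
Qed.

Lemma evz_cofactor_1DXm (k : nat) :
  evz ((1 - 'X^m) * \sum_(j < k) 'X^m ^+ (2 * j)) = 2 * k%:R.
Proof.
rewrite rmorphM rmorphB rmorph1 rmorphXn evzX prim_expr_half.
rewrite opprK rmorph_sum (eq_bigr (fun=> 1)) ?sumr_const ?card_ord //.
move=> j _; rewrite rmorphXn rmorphXn evzX -exprM mulnCA mulnA exprM.
by rewrite (prim_expr_order z_prim) expr1n.
Qed.

Lemma sub1Xn_factor (i : nat) : (0 < i)%N ->
  exists2 c, 1 - 'X^i = (1 + 'X^m) ^+ (2 * m %| i)%N * c & evz c != 0.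
Proof.
move=> i_gt0; have [/dvdnP[k iE]|ndvd] := boolP (2 * m %| i)%N; last first.
  by exists (1 - 'X^i); rewrite ?mul1r // evz_1BXn_eq0.
have k_gt0 : (0 < k)%N by move: i_gt0; rewrite iE muln_gt0 => /andP[].
exists ((1 - 'X^m) * \sum_(j < k) 'X^m ^+ (2 * j)).
  by rewrite iE expr1 (mulnC k) mulnAC mulnC exprM sub1X2n_factor.
by rewrite evz_cofactor_1DXm mulf_neq0 ?pnatr_eq0 // -lt0n.
Qed.

Lemma qpoch_factor (n : nat) :
  exists2 s, qpoch n = (1 + 'X^m) ^+ (n %/ (2 * m)) * s & evz s != 0.
Proof.
elim: n => [|n [s qpochE evz_s]].
  by exists 1; rewrite ?rmorph1 ?oner_neq0 // /qpoch big_geq // div0n mulr1.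
have [c cE evz_c] := sub1Xn_factor (ltn0Sn n).
exists (s * c); last by rewrite rmorphM mulf_neq0.
rewrite /qpoch big_nat_recr //= -/(qpoch n) qpochE cE divnS ?muln_gt0 //.
by rewrite addnC exprD mulrACA.
Qed.

End EvalAtPrimitiveRoot.

Theorem lemma4p4 (n m : nat) (hn : (1 <= n)%N) (hm : (1 <= m)%N) :
  zdivides ((1 + 'X^m) ^+ (n %/ (2 * m))) (qpoch n) /\
  ~ zdivides ((1 + 'X^m) ^+ (n %/ (2 * m)).+1) (qpoch n).
Proof.
have [z z_prim] : {z : algC | (2 * m)%N.-primitive_root z}.
  by apply: C_prim_root_exists; rewrite muln_gt0.
have [s qpochE evz_s] := qpoch_factor hm z_prim n.
split; first by exists s.
have Xm_neq0 : (1 + 'X^m : {poly int}) != 0.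
  by rewrite addrC -polyC1 monic_neq0 // monicXnaddC.
case=> r; rewrite qpochE exprSr -mulrA => /(mulfI (expf_neq0 _ Xm_neq0)) sE.
by move: evz_s; rewrite sE rmorphM (evz_1DXm hm z_prim) mul0r eqxx.
Qed.
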